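(* Let $n\geqslant1$. Every rainbow on $\{0,\dots,n\}$ of maximal size (among all rainbows on $\{0,\dots,n\}$) has exactly $\lfloor\frac{n+1}{2}\rfloor$ arcs.
   Context: An arc is a pair $\underline{x}\to\underline{y}$ of integers $0\leqslant x<y\leqslant n$, with weight $\binom{n}{x,\,y-x,\,n-y}=\frac{n!}{x!(y-x)!(n-y)!}$ (this is the number of subgroup inclusions $H\leqslant K$ in $C_{p_1\cdots p_n}$, $p_i$ distinct primes, with $|H|$ a product of $x$ of the primes and $|K|$ a product of $y$ of them). A rainbow on $\{0,\dots,n\}$ is a set of arcs $\{\underline{x_i}\to\underline{y_i}\}_{0\leqslant i\leqslant m}$ with $x_0<x_1<\dots<x_m<y_m<\dots<y_0$; its size is the sum of the weights of its arcs. *)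

From mathcomp Require Import all_boot.
Set Implicit Arguments. Unset Strict Implicit. Unset Printing Implicit Defensive.

Definition rarc := (nat * nat)%type.

Definition arc_weight (n : nat) (a : rarc) : nat :=
  n`! %/ ((a.1)`! * (a.2 - a.1)`! * (n - a.2)`!).

Definition nested (a b : rarc) : bool := (a.1 < b.1) && (b.2 < a.2).

(* A rainbow on {0..n}: the arcs {x_i -> y_i}_{0<=i<=m} listed in order
   i = 0..m, with x_0 < ... < x_m < y_m < ... < y_0, all arcs in {0..n}
   (so 0 <= x_i < y_i <= n). *)
Definition is_rainbow (n : nat) (s : seq rarc) : bool :=
  [&& s != [::], sorted nested s & all (fun a => (a.1 < a.2) && (a.2 <= n)) s].

Definition rainbow_size (n : nat) (s : seq rarc) : nat :=
  \sum_(a <- s) arc_weight n a.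

From mathcomp Require Import all_boot zify.

(* The weight of x -> y is the trinomial coefficient n! / (x! (y - x)! (n - y)!).  In a
   rainbow of maximal size, moving one endpoint by one step cannot increase the weight of
   its arc, and comparing the weights of neighbouring positions shows that consecutive
   arcs are adjacent: x_(i+1) = x_i + 1 and y_(i+1) = y_i - 1.  A maximal rainbow with
   k arcs is thus tight, and its size is a diagonal sum of trinomial coefficients.  The
   innermost arc is nonempty, so 2k <= n + 1.  If 2k < n, adding an inner or outer arc
   (possibly after shifting all arcs by one) gives a larger rainbow; the only delicate
   case, n = 2k + 1 with the rainbow 1 -> n, ..., k -> k + 2, reduces to T(n, 1) <= T(n, 0)
   for the coefficients T(n, j) of t^j in (t^-1 + 1 + t)^n, which decrease in j >= 0. *)

Definition trinom (n a c : nat) : nat := 'C(n, a) * 'C(n - a, c).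

Lemma trinom_fact n a c :
  a + c <= n -> trinom n a c * (a`! * c`! * (n - a - c)`!) = n`!.
Proof.
move=> le_acn; have le_an : a <= n by lia.
have le_c : c <= n - a by lia.
rewrite /trinom -(bin_fact le_an) -(bin_fact le_c); lia.
Qed.

Lemma trinom_small n a c : n < a + c -> trinom n a c = 0.
Proof.
move=> lt_n_ac; rewrite /trinom.
have [le_an|lt_na] := leqP a n; last by rewrite bin_small.
by rewrite [in 'C(n - a, c)]bin_small ?muln0 //; lia.
Qed.

Lemma trinom_gt0 n a c : a + c <= n -> 0 < trinom n a c.
Proof. by move=> le_acn; rewrite muln_gt0 !bin_gt0; lia. Qed.

Lemma trinomC n a c : trinom n a c = trinom n c a.
Proof.
have [le_acn|lt_n_ac] := leqP (a + c) n; last by rewrite !trinom_small //; lia.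
have fact_gt0 : 0 < a`! * c`! * (n - a - c)`! by rewrite !muln_gt0 !fact_gt0.
apply/eqP; rewrite -(eqn_pmul2r fact_gt0) trinom_fact //.
by rewrite [a`! * _]mulnC subnAC trinom_fact // addnC.
Qed.

Lemma mul_trinom_right n a c :
  trinom n a c.+1 * c.+1 = trinom n a c * (n - a - c).
Proof. by rewrite /trinom -mulnA [_ * c.+1]mulnC mul_bin_left mulnCA mulnC. Qed.

Lemma mul_trinom_left n a c :
  trinom n a.+1 c * a.+1 = trinom n a c * (n - a - c).
Proof. by rewrite trinomC mul_trinom_right trinomC; congr (_ * _); lia. Qed.

Lemma leq_trinom_swap n a c : c < a -> trinom n a c <= trinom n a.-1 c.+1.
Proof.
case: a => [//|a] lt_ca /=.
rewrite -(leq_pmul2r (ltn0Sn a)) mul_trinom_left -mul_trinom_right.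
by rewrite leq_mul2l lt_ca orbT.
Qed.

Lemma trinomSS n a c :
  trinom n.+1 a.+1 c.+1 = trinom n a c.+1 + trinom n a.+1 c + trinom n a.+1 c.+1.
Proof.
rewrite /trinom subSS binS mulnDl addnC -addnA -mulnDr; congr (_ + _).
have [lt_an|le_na] := ltnP a n; last by rewrite bin_small ?mul0n.
by rewrite addnC -binS; congr (_ * 'C(_, _)); lia.
Qed.

Definition trinom_diag (n a c k : nat) : nat := \sum_(i < k) trinom n (a + i) (c + i).

Lemma trinom_diagC n a c k : trinom_diag n a c k = trinom_diag n c a k.
Proof. by apply: eq_bigr => i _; rewrite trinomC. Qed.

Lemma trinom_diag_recr n a c k :
  trinom_diag n a c k.+1 = trinom_diag n a c k + trinom n (a + k) (c + k).
Proof. by rewrite /trinom_diag big_ord_recr. Qed.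

Lemma trinom_diag_recl n a c k :
  trinom_diag n a c k.+1 = trinom n a c + trinom_diag n a.+1 c.+1 k.
Proof.
rewrite /trinom_diag big_ord_recl !addn0; congr (_ + _).
by apply: eq_bigr => i _; rewrite !addSnnS.
Qed.

Lemma trinom_diag_widen n a c k m :
  n < a + c + k.*2 -> k <= m -> trinom_diag n a c m = trinom_diag n a c k.
Proof.
move=> lt_n le_km; rewrite /trinom_diag -(subnKC le_km) big_split_ord /=.
by rewrite [X in _ + X]big1 ?addn0 // => i _; apply: trinom_small; lia.
Qed.

Lemma trinom_diagSS n a c k :
  trinom_diag n.+1 a.+1 c.+1 k =
  trinom_diag n a c.+1 k + trinom_diag n a.+1 c k + trinom_diag n a.+1 c.+1 k.
Proof.
rewrite /trinom_diag -!big_split; apply: eq_bigr => i _.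
by rewrite !addSn trinomSS -!addnS.
Qed.

Lemma leq_trinom_diag_swap n a c k :
  c < a -> trinom_diag n a c k <= trinom_diag n a.-1 c.+1 k.
Proof.
move=> lt_ca; apply: leq_sum => i _.
have -> : a.-1 + i = (a + i).-1 by lia.
by rewrite addSn leq_trinom_swap //; lia.
Qed.

(* The coefficient of t^j in (t^-1 + 1 + t)^n; the recurrences below multiply by one
   more factor (t^-1 + 1 + t). *)
Definition trinom_row (n j : nat) : nat := trinom_diag n 0 j n.+1.

Lemma trinom_diag_row n j : trinom_diag n 0 j n.+2 = trinom_row n j.
Proof. by apply: trinom_diag_widen; lia. Qed.

Lemma trinom_rowSS n j :
  trinom_row n.+1 j.+1 = trinom_row n j + trinom_row n j.+1 + trinom_row n j.+2.
Proof.
rewrite /trinom_row trinom_diag_recl trinom_diagSS.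
rewrite -[trinom_diag n 0 j _]trinom_diag_row -[trinom_diag n 0 j.+1 _]trinom_diag_row.
rewrite (trinom_diag_recl n 0 j) (trinom_diag_recl n 0 j.+1).
have trinom0S : trinom n.+1 0 j.+1 = trinom n 0 j + trinom n 0 j.+1.
  by rewrite /trinom !bin0 !subn0 binS !mul1n addnC.
rewrite trinom0S; lia.
Qed.

Lemma trinom_row0 n : trinom_row n.+1 0 = trinom_row n 0 + (trinom_row n 1).*2.
Proof.
rewrite /trinom_row trinom_diag_recl trinom_diagSS [trinom_diag n 1 0 _]trinom_diagC.
rewrite -[trinom_diag n 0 0 _]trinom_diag_row (trinom_diag_recl n 0 0).
by rewrite /trinom !bin0; lia.
Qed.

Lemma trinom_row_decr n j : trinom_row n j.+1 <= trinom_row n j.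
Proof.
elim: n j => [j|n IHn [|j]].
- by rewrite /trinom_row /trinom_diag big_ord1 trinom_small.
- by rewrite trinom_rowSS trinom_row0; have := IHn 1; lia.
- by rewrite !trinom_rowSS; have := IHn j; have := IHn j.+1; have := IHn j.+2; lia.
Qed.

Lemma trinom_diag_central k :
  trinom_diag k.*2.+1 0 1 k < trinom_diag k.*2.+1 0 0 k.+1.
Proof.
have := trinom_row_decr k.*2.+1 0; rewrite /trinom_row.
rewrite (@trinom_diag_widen _ 0 1 k.+1) ?(@trinom_diag_widen _ 0 0 k.+1); try lia.
by rewrite trinom_diag_recr; have := @trinom_gt0 k.*2.+1 (0 + k) (1 + k); lia.
Qed.

Lemma trinom_diag_max [n a c k] :
  0 < k -> a + c + k.*2 <= n.+1 ->
  (forall a' c' k', 0 < k' -> a' + c' + k'.*2 <= n.+1 ->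
     trinom_diag n a' c' k' <= trinom_diag n a c k) ->
  n <= k.*2.
Proof.
wlog le_ca : a c / c <= a.
  move=> gen k_gt0 fits maximal; have [le_ca|lt_ac] := leqP c a.
    exact: (gen a c le_ca k_gt0 fits maximal).
  apply: (gen c a (ltnW lt_ac) k_gt0); first lia.
  by move=> a' c' k' k'_gt0 fits'; rewrite [X in _ <= X]trinom_diagC; apply: maximal.
move=> k_gt0 fits maximal; rewrite leqNgt; apply/negP => lt_kn.
have better a' c' : a' + c' + k.+1.*2 <= n.+1 ->
    trinom_diag n a c k < trinom_diag n a' c' k.+1 -> False.
  by move=> fits' lt_diag; have := maximal a' c' k.+1 (ltn0Sn k) fits'; lia.
(* Otherwise add an innermost arc, add an outermost arc, or (when c = 0) shift all arcs
   one step left and add an outermost arc: each strictly increases the size. *)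
have [fits_inside|] := leqP (a + c + k.+1.*2) n.+1.
  apply: (better a c fits_inside); rewrite trinom_diag_recr.
  by have := @trinom_gt0 n (a + k) (c + k); lia.
move=> no_room_inside; have [c0|c_gt0] := posnP c; last first.
  apply: (better a.-1 c.-1); first lia.
  rewrite trinom_diag_recl !prednK //; last lia.
  by have := @trinom_gt0 n a.-1 c.-1; lia.
subst c; have [a_gt1|a_le1] := ltnP 1 a.
  apply: (better (a - 2) 0); first lia.
  rewrite trinom_diag_recl (_ : (a - 2).+1 = a.-1); last lia.
  have := @leq_trinom_diag_swap n a 0 k; have := @trinom_gt0 n (a - 2) 0; lia.
have n_odd : n = k.*2.+1 by lia.
have a1 : a = 1 by lia.
subst n a; apply: (better 0 0); first lia.
by rewrite trinom_diagC; apply: trinom_diag_central.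
Qed.

Lemma leq_of_mul_eq [A B u v] : A * u = B * v -> B <= A -> 0 < A -> u <= v.
Proof. by move=> AuBv le_BA A_gt0; rewrite -(leq_pmul2l A_gt0) AuBv leq_mul2r le_BA orbT. Qed.

Lemma arc_weight_trinom n x y : x <= y <= n -> arc_weight n (x, y) = trinom n x (n - y).
Proof.
move=> arc_xy; rewrite /arc_weight /= -(@trinom_fact n x (n - y)); last lia.
rewrite (_ : n - x - (n - y) = y - x); last lia.
by rewrite [_ * (y - x)`! * _]mulnAC mulnK // !muln_gt0 !fact_gt0.
Qed.

Lemma arc_weight_gt0 n x y : x < y <= n -> 0 < arc_weight n (x, y).
Proof. by move=> arc_xy; rewrite arc_weight_trinom ?trinom_gt0 //; lia. Qed.

Lemma mul_arc_weight_l [n x y] :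
  x < y <= n -> arc_weight n (x.+1, y) * x.+1 = arc_weight n (x, y) * (y - x).
Proof.
move=> arc_xy; rewrite !arc_weight_trinom ?mul_trinom_left; try lia.
by congr (_ * _); lia.
Qed.

Lemma mul_arc_weight_r [n x y] :
  x < y < n -> arc_weight n (x, y) * (n - y) = arc_weight n (x, y.+1) * (y.+1 - x).
Proof.
move=> arc_xy; rewrite !arc_weight_trinom; try lia.
rewrite (_ : n - y = (n - y.+1).+1) ?mul_trinom_right; last lia.
by congr (_ * _); lia.
Qed.

Lemma rainbow_nthP n s :
  reflect [/\ 0 < size s,
              forall i, i.+1 < size s -> nested (nth (0, 0) s i) (nth (0, 0) s i.+1)
            & forall i, i < size s -> (nth (0, 0) s i).1 < (nth (0, 0) s i).2 <= n]
          (is_rainbow n s).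
Proof.
apply: (iffP and3P) => [[s_nil s_sorted s_arcs]|[s_gt0 s_sorted s_arcs]]; split.
- by case: (s) s_nil.
- exact/(sortedP (0, 0)).
- by move/(all_nthP (0, 0)): s_arcs.
- by case: (s) s_gt0.
- exact/(sortedP (0, 0)).
- exact/(all_nthP (0, 0)).
Qed.

Lemma rainbow_size_set_nth n s i p : i < size s ->
  rainbow_size n (set_nth (0, 0) s i p) + arc_weight n (nth (0, 0) s i) =
  rainbow_size n s + arc_weight n p.
Proof.
move=> lt_i; rewrite set_nthE lt_i -[in rainbow_size n s](cat_take_drop i s).
rewrite (drop_nth (0, 0) lt_i) /rainbow_size !big_cat !big_cons /=; lia.
Qed.

Definition tight_rainbow (n a c k : nat) : seq rarc := mkseq (fun i => (a + i, n - c - i)) k.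

Lemma is_rainbow_tight n a c k :
  is_rainbow n (tight_rainbow n a c k) = (0 < k) && (a + c + k.*2 <= n.+1).
Proof.
apply/rainbow_nthP/andP; rewrite size_mkseq.
  move=> [k_gt0 _ arcs]; split=> //.
  by have := arcs k.-1; rewrite nth_mkseq /=; lia.
move=> [k_gt0 fits]; split=> // i lt_i; rewrite !nth_mkseq /nested /=; lia.
Qed.

Lemma rainbow_size_tight n a c k : a + c + k.*2 <= n.+1 ->
  rainbow_size n (tight_rainbow n a c k) = trinom_diag n a c k.
Proof.
move=> fits; rewrite /rainbow_size big_map /trinom_diag.
rewrite -(big_mkord xpredT (fun i => trinom n (a + i) (c + i))) /index_iota subn0.
apply: eq_big_seq => i; rewrite mem_iota => /andP[_ lt_i].
by rewrite arc_weight_trinom; [congr trinom | ]; lia.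
Qed.

Section MaximalRainbow.

Variables (n : nat) (s : seq rarc).
Hypothesis s_rainbow : is_rainbow n s.
Hypothesis s_maximal :
  forall t : seq rarc, is_rainbow n t -> rainbow_size n t <= rainbow_size n s.

Local Notation x_ i := (nth (0, 0) s i).1.
Local Notation y_ i := (nth (0, 0) s i).2.

Lemma rainbow_arc i : i < size s -> x_ i < y_ i <= n.
Proof. by case/rainbow_nthP: s_rainbow => _ _; apply. Qed.

Lemma rainbow_nested i : i.+1 < size s -> x_ i < x_ i.+1 /\ y_ i.+1 < y_ i.
Proof. by case/rainbow_nthP: s_rainbow => _ s_nested _ /s_nested/andP. Qed.

Lemma max_rainbow_replace i p : i < size s ->
  (0 < i -> nested (nth (0, 0) s i.-1) p) ->
  (i.+1 < size s -> nested p (nth (0, 0) s i.+1)) ->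
  p.1 < p.2 <= n -> arc_weight n p <= arc_weight n (x_ i, y_ i).
Proof.
move=> lt_i nested_left nested_right p_arc.
have t_rainbow : is_rainbow n (set_nth (0, 0) s i p).
  case/rainbow_nthP: s_rainbow => s_gt0 s_nested s_arcs.
  apply/rainbow_nthP; rewrite size_set_nth (maxn_idPr lt_i).
  split=> // j lt_j; rewrite !nth_set_nth /=.
    have [eq_ji|_] := eqVneq j i; first by subst j; rewrite gtn_eqF //; apply: nested_right.
    have [eq_Sj_i|_] := eqVneq j.+1 i; last exact: s_nested.
    by move: nested_left; rewrite -eq_Sj_i; apply.
  by case: ifP => // _; apply: s_arcs.
have := s_maximal _ t_rainbow; have := rainbow_size_set_nth n _ _ p lt_i.
by rewrite -surjective_pairing; lia.
Qed.

Lemma max_rainbow_shrink i p : i < size s ->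
  x_ i <= p.1 -> p.1 < p.2 -> p.2 <= y_ i ->
  (i.+1 < size s -> (p.1 < x_ i.+1) && (y_ i.+1 < p.2)) ->
  arc_weight n p <= arc_weight n (x_ i, y_ i).
Proof.
move=> lt_i le_x lt_p le_y nested_right; apply: max_rainbow_replace => //.
  case: i lt_i le_x le_y {nested_right} => [//|i] lt_Si le_x le_y _.
  by have := rainbow_nested i lt_Si; rewrite /nested /=; lia.
by have := rainbow_arc i lt_i; lia.
Qed.

Lemma max_rainbow_grow i p : i < size s ->
  p.1 <= x_ i -> y_ i <= p.2 <= n ->
  (0 < i -> (x_ i.-1 < p.1) && (p.2 < y_ i.-1)) ->
  arc_weight n p <= arc_weight n (x_ i, y_ i).
Proof.
move=> lt_i le_x le_y nested_left; apply: max_rainbow_replace => //.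
  by move=> lt_Si; have := rainbow_nested i lt_Si; rewrite /nested; lia.
by have := rainbow_arc i lt_i; lia.
Qed.

Lemma max_rainbow_adjacent_x i : i.+1 < size s -> x_ i.+1 = (x_ i).+1.
Proof.
move=> lt_Si; have lt_i := ltnW lt_Si.
have [lt_x lt_y] := rainbow_nested i lt_Si.
have arc_i := rainbow_arc i lt_i; have arc_Si := rainbow_arc i.+1 lt_Si.
apply/eqP; rewrite eqn_leq lt_x andbT leqNgt; apply/negP => gap.
have shrink : y_ i - x_ i <= (x_ i).+1.
  apply: (leq_of_mul_eq (esym (mul_arc_weight_l arc_i))); last exact: arc_weight_gt0.
  by apply: max_rainbow_shrink => /=; lia.
have grow : x_ i.+1 <= y_ i.+1 - (x_ i.+1).-1.
  have arc_p : (x_ i.+1).-1 < y_ i.+1 <= n by lia.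
  have := mul_arc_weight_l arc_p; rewrite prednK; last lia.
  move/leq_of_mul_eq; apply; last exact: arc_weight_gt0.
  by apply: max_rainbow_grow => /=; lia.
lia.
Qed.

Lemma max_rainbow_adjacent_y i : i.+1 < size s -> y_ i = (y_ i.+1).+1.
Proof.
move=> lt_Si; have lt_i := ltnW lt_Si.
have [lt_x lt_y] := rainbow_nested i lt_Si.
have arc_i := rainbow_arc i lt_i; have arc_Si := rainbow_arc i.+1 lt_Si.
apply/eqP; rewrite eqn_leq lt_y andbT leqNgt; apply/negP => gap.
have shrink : y_ i - x_ i <= n - (y_ i).-1.
  have arc_p : x_ i < (y_ i).-1 < n by lia.
  have := mul_arc_weight_r arc_p; rewrite prednK; last lia.
  move/esym/leq_of_mul_eq; apply; last exact: arc_weight_gt0.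
  by apply: max_rainbow_shrink => /=; lia.
have grow : n - y_ i.+1 <= (y_ i.+1).+1 - x_ i.+1.
  have arc_Si' : x_ i.+1 < y_ i.+1 < n by lia.
  apply: (leq_of_mul_eq (mul_arc_weight_r arc_Si')); last exact: arc_weight_gt0.
  by apply: max_rainbow_grow => /=; lia.
lia.
Qed.

Lemma max_rainbow_nth i : i < size s -> x_ i = x_ 0 + i /\ y_ i = y_ 0 - i.
Proof.
elim: i => [|i IHi] lt_Si; first by rewrite addn0 subn0.
have := IHi (ltnW lt_Si); have := max_rainbow_adjacent_x i lt_Si.
by have := max_rainbow_adjacent_y i lt_Si; lia.
Qed.

Lemma max_rainbow_tight : exists a c k, s = tight_rainbow n a c k.
Proof.
exists (x_ 0), (n - y_ 0), (size s).
apply: (@eq_from_nth _ (0, 0)) => [|i lt_i]; first by rewrite size_mkseq.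
have [x_i y_i] := max_rainbow_nth i lt_i; have := rainbow_arc 0 (leq_ltn_trans (leq0n i) lt_i).
by rewrite nth_mkseq // [nth _ s i]surjective_pairing x_i y_i => arc_0; congr pair; lia.
Qed.

End MaximalRainbow.

Theorem corollary5p12 (n : nat) (s : seq rarc) :
  1 <= n ->
  is_rainbow n s ->
  (forall t : seq rarc, is_rainbow n t -> rainbow_size n t <= rainbow_size n s) ->
  size s = n.+1./2.
Proof.
move=> _ s_rainbow s_maximal.
have [a [c [k s_tight]]] := max_rainbow_tight _ _ s_rainbow s_maximal; subst s.
move: s_rainbow; rewrite size_mkseq is_rainbow_tight => /andP[k_gt0 fits].
have diag_maximal a' c' k' : 0 < k' -> a' + c' + k'.*2 <= n.+1 ->
    trinom_diag n a' c' k' <= trinom_diag n a c k.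
  move=> k'_gt0 fits'; rewrite -!rainbow_size_tight //.
  by apply: s_maximal; rewrite is_rainbow_tight k'_gt0.
have := trinom_diag_max k_gt0 fits diag_maximal; lia.
Qed.
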